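(* Let $C$ be an $(n,n-b)$-code, let $d\in\{0,1,\dots,b\}$, and let $C'$ be any $(m,m-1)$ MDS code. The following are equivalent: (a) $C$ is $\operatorname{rMDS}^d(m)$; (b) $C'\otimes C$ is a $(1,b-d)$-relaxed $(m,n,1,b)$-MR tensor code.
   Context: An $(n,k)$-code is a $k$-dimensional subspace of $\mathbb F^n$ with a $k\times n$ generator matrix. For a $k\times n$ matrix $V$ and $A\subseteq[n]$, $V|_A$ is the submatrix of columns in $A$. For $A_1,\dots,A_\ell\subseteq[n]$, $\mathcal G_{A_1,\dots,A_\ell}[V]$ is the $\ell k\times(k+\sum|A_i|)$ block matrix whose $i$-th block row has $I_k$ in the first block column and $V|_{A_i}$ in block column $i+1$, zeros elsewhere. Sets are $V$-saturated if $\operatorname{rank}\mathcal G_{A_1,\dots,A_\ell}[V]=\ell k$, and have the $k$-dimensional saturation property if they are $W$-saturated for a generic $k\times n$ matrix $W$ (independent indeterminate entries). An $(n,k)$-code with generator matrix $G$ is $\operatorname{rMDS}^d(\ell)$ ($0\le d\le n-k$) if every family $A_1,\dots,A_\ell$ with the $(k+d)$-dimensional saturation property is $G$-saturated. Tensor codes: for an $(m,m-a)$-code $C_1$ and an $(n,n-b)$-code $C_2$, $C_1\otimes C_2$ is the code of $m\times n$ arrays whose columns lie in $C_1$ and rows in $C_2$. An erasure pattern $E\subseteq[m]\times[n]$ is correctable by a code if every codeword is determined by its entries outside $E$. $\mathcal E^{m,n}_{a,b}$ denotes the set of patterns correctable by an $(m,n,a,b)$-maximally recoverable tensor code over the relevant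 field characteristic, i.e. by $C_1\otimes C_2$ where $C_1,C_2$ have generic generator matrices of sizes $(m-a)\times m$ and $(n-b)\times n$. For $a'\le a$, $b'\le b$, $C_1\otimes C_2$ (with $C_1$ an $(m,m-a)$-code and $C_2$ an $(n,n-b)$-code) is an $(a',b')$-relaxed $(m,n,a,b)$-MR tensor code if it corrects every $E\in\mathcal E^{m,n}_{a',b'}$. *)

From HB Require Import structures.
From mathcomp Require Import all_boot all_order all_algebra.
From mathcomp Require Import fraction.
From mathcomp Require Import mpoly.

Set Implicit Arguments.
Unset Strict Implicit.
Unset Printing Implicit Defensive.

Import GRing.Theory.
Local Open Scope ring_scope.

(* Codes are given by (full-row-rank) generator matrices; the code is the
   row space.  An (n,k)-code with generator matrix G : 'M_(k,n). *)

(* V|_A : the submatrix of the columns of V indexed by A (in increasing order) *)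
Definition restr_cols (R : Type) (k n : nat) (V : 'M[R]_(k, n))
  (A : {set 'I_n}) : 'M[R]_(k, #|A|) :=
  colsub (@enum_val _ (mem A)) V.

Definition satmx (R : pzRingType) (k n l : nat) (V : 'M[R]_(k, n))
  (A : 'I_l -> {set 'I_n}) :=
  row_mx (\mxcol_(i < l) (1%:M : 'M[R]_k))
         (\mxblock_(i < l, j < l)
             (if i == j then restr_cols V (A j) else 0 : 'M[R]_(k, #|A j|))).

Definition saturated (R : fieldType) (k n l : nat) (V : 'M[R]_(k, n))
  (A : 'I_l -> {set 'I_n}) : Prop :=
  \rank (satmx V A) = (l * k)%N.

Definition ratfun (F : fieldType) (N : nat) := {fraction {mpoly F[N]}}.

Definition genmx (F : fieldType) (k n : nat) : 'M[ratfun F (k * n)]_(k, n) :=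
  \matrix_(i, j) (tofrac 'X_(mxvec_index i j)).

Definition sat_property (F : fieldType) (k n l : nat)
  (A : 'I_l -> {set 'I_n}) : Prop :=
  saturated (genmx F k n) A.

Definition rMDS (F : fieldType) (k n : nat) (d l : nat) (G : 'M[F]_(k, n)) : Prop :=
  forall A : 'I_l -> {set 'I_n}, sat_property F (k + d) A -> saturated G A.

Definition MDS (F : fieldType) (k n : nat) (G : 'M[F]_(k, n)) : Prop :=
  forall c : 'rV[F]_n, (c <= G)%MS -> c != 0 ->
    (n - k + 1 <= #|[set j | c ord0 j != 0%R]|)%N.

Definition in_tensor (R : fieldType) (k1 m k2 n : nat)
  (G1 : 'M[R]_(k1, m)) (G2 : 'M[R]_(k2, n)) (X : 'M[R]_(m, n)) : Prop :=
  (forall j, ((col j X)^T <= G1)%MS) /\ (forall i, (row i X <= G2)%MS).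

Definition correctable (R : fieldType) (k1 m k2 n : nat)
  (G1 : 'M[R]_(k1, m)) (G2 : 'M[R]_(k2, n)) (E : {set 'I_m * 'I_n}) : Prop :=
  forall X Y : 'M[R]_(m, n), in_tensor G1 G2 X -> in_tensor G1 G2 Y ->
    (forall i j, (i, j) \notin E -> X i j = Y i j) -> X = Y.

Definition gen_tensor_N (m n a b : nat) := ((m - a) * m + (n - b) * n)%N.

Definition genG1 (F : fieldType) (m n a b : nat) :
  'M[ratfun F (gen_tensor_N m n a b)]_(m - a, m) :=
  \matrix_(i, j) (tofrac 'X_(lshift ((n - b) * n) (mxvec_index i j))).

Definition genG2 (F : fieldType) (m n a b : nat) :
  'M[ratfun F (gen_tensor_N m n a b)]_(n - b, n) :=
  \matrix_(i, j) (tofrac 'X_(rshift ((m - a) * m) (mxvec_index i j))).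

Definition MR_correctable (F : fieldType) (m n a b : nat)
  (E : {set 'I_m * 'I_n}) : Prop :=
  correctable (genG1 F m n a b) (genG2 F m n a b) E.

Definition relaxed_MR (F : fieldType) (m n a b a' b' : nat)
  (G1 : 'M[F]_(m - a, m)) (G2 : 'M[F]_(n - b, n)) : Prop :=
  (a' <= a)%N /\ (b' <= b)%N /\
  forall E : {set 'I_m * 'I_n}, @MR_correctable F m n a' b' E -> correctable G1 G2 E.

(* An (m, m-1) MDS code is the kernel of a parity vector [lam] with no zero
   entry, so an array [X] lies in C' (x) C iff its rows lie in C and
   [\sum_i lam_i X_i = 0].  Writing [X_i = lam_i^-1 w_i G], the codewords
   vanishing off an erasure pattern E correspond to the families [w] with
   [\sum_i w_i = 0] and [w_i G|_(A_i) = 0], A_i being the unerased part of row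
   i: E is correctable iff A_1, ..., A_m are G-saturated.  This applies to
   C' (x) C and to the generic (1, b-d) MR tensor code alike, whose column code
   is MDS and whose row generator matrix is generic of size (n-b+d) x n; the
   latter is saturated exactly when the (n-b+d)-dimensional saturation property
   holds, because a generic matrix is saturated as soon as one of its
   specializations is. *)

From Pilot Require Import Defs.
From mathcomp Require Import all_boot all_order all_algebra.
From mathcomp Require Import fraction mpoly zify.
Set Implicit Arguments.
Unset Strict Implicit.
Unset Printing Implicit Defensive.
Import GRing.Theory.
Local Open Scope ring_scope.

Lemma row_free_colsubW (K : fieldType) p q q' (s : 'I_q' -> 'I_q)
    (B : 'M[K]_(p, q)) :
  row_free (colsub s B) -> row_free B.
Proof.
move=> freeBs; apply: inj_row_free => v vB0; apply/eqP.
rewrite -(mulmx_free_eq0 _ freeBs) mulmx_colsub vB0.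
by apply/eqP/matrixP => i j; rewrite !mxE.
Qed.

Lemma row_free_minorP (K : fieldType) p q (B : 'M[K]_(p, q)) :
  row_free B <-> exists s : 'I_p -> 'I_q, \det (colsub s B) != 0.
Proof.
split=> [freeB | [s]]; last first.
  by rewrite -unitfE -unitmxE -row_free_unit; apply: row_free_colsubW.
have fullBT : row_full B^T by rewrite /row_full mxrank_tr.
exists (fullrankfun fullBT); have := fullrowsub_unit fullBT.
by rewrite unitmxE unitfE -det_tr trmx_mxsub trmxK.
Qed.

Section Saturation.
Variables (K : fieldType) (k n l : nat) (V : 'M[K]_(k, n)) (A : 'I_l -> {set 'I_n}).

Lemma saturated_row_free : saturated V A <-> row_free (satmx V A).
Proof.
rewrite /saturated /row_free.
have -> : (l * k)%N = (\sum_(i < l) k)%N by rewrite sum_nat_const card_ord.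
by split=> [->|/eqP].
Qed.

Lemma mul_satmx (u : 'rV_(\sum_(i < l) k)) :
  u *m satmx V A =
  row_mx (\sum_i submxrow u i) (\mxrow_j (submxrow u j *m restr_cols V (A j))).
Proof.
rewrite /satmx mul_mx_row -{1 2}[u]submxrowK mul_mxrow_mxcol mul_mxrow_mxblock.
congr row_mx; first by apply: eq_bigr => i _; rewrite mulmx1.
apply: eq_mxrow => j; rewrite (bigD1 j) //= eqxx big1 ?addr0 // => i /negPf ->.
by rewrite mulmx0.
Qed.

Lemma saturatedP :
  saturated V A <->
  (forall w : 'I_l -> 'rV_k, \sum_i w i = 0 ->
     (forall i, w i *m restr_cols V (A i) = 0) -> forall i, w i = 0).
Proof.
rewrite saturated_row_free; split=> [freeV w sum_w0 wA0 i | wP].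
  suff w0 : \mxrow_i w i = 0 by rewrite -(mxrowK w i) w0 submxrow0.
  apply: (row_free_inj freeV); rewrite mul0mx mul_satmx.
  have -> : \sum_i submxrow (\mxrow_i w i) i = \sum_i w i.
    by apply: eq_bigr => i' _; rewrite mxrowK.
  have -> : \mxrow_j (submxrow (\mxrow_i w i) j *m restr_cols V (A j)) = 0.
    rewrite -(mxrow0 (q_ := fun j => #|A j|)).
    by apply: eq_mxrow => j; rewrite mxrowK wA0.
  by rewrite sum_w0 row_mx0.
apply: inj_row_free => u; rewrite mul_satmx => /eqP; rewrite row_mx_eq0.
case/andP=> /eqP sum_u0 /eqP uA0; rewrite -[u]submxrowK -(mxrow0 (q_ := fun=> k)).
apply: eq_mxrow => i; apply: (wP _ sum_u0) => j.
by have := congr1 (fun M => submxrow M j) uA0; rewrite /= mxrowK submxrow0.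
Qed.

End Saturation.

Lemma map_satmx (R S : pzRingType) (f : {rmorphism R -> S}) k n l
    (V : 'M[R]_(k, n)) (A : 'I_l -> {set 'I_n}) :
  map_mx f (satmx V A) = satmx (map_mx f V) A.
Proof.
rewrite /satmx map_row_mx; congr row_mx; apply/matrixP => i j; rewrite !mxE.
  by rewrite rmorphMn rmorph1.
by case: eqP => _; rewrite !mxE ?rmorph0.
Qed.

Section HyperplaneCode.
Variables (K : fieldType) (m : nat) (G : 'M[K]_(m - 1, m)).
Hypothesis m_gt0 : (0 < m)%N.

Lemma hyperplane_code_parity :
  row_free G ->
  exists lam : 'cV[K]_m, forall x : 'rV_m, (x <= G)%MS <-> x *m lam = 0.
Proof.
move=> freeG; have rankG : \rank G = (m - 1)%N by apply/eqP.
set r := nz_row (kermx G^T).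
have r_neq0 : r != 0.
  by rewrite nz_row_eq0 -mxrank_eq0 mxrank_ker mxrank_tr rankG; lia.
have Gr0 : G *m r^T = 0.
  apply: trmx_inj; rewrite trmx_mul trmxK trmx0.
  by apply/sub_kermxP; apply: nz_row_sub.
exists r^T => x; split=> [/submxP[y ->] | /sub_kermxP xr0].
  by rewrite -mulmxA Gr0 mulmx0.
have G_ker : (G <= kermx r^T)%MS by apply/sub_kermxP.
have rank_rT : \rank r^T = 1%N.
  by apply/eqP; rewrite mxrank_tr eqn_leq rank_leq_row lt0n mxrank_eq0.
apply: submx_trans xr0 _; rewrite -(mxrank_leqif_sup G_ker).2.
by rewrite mxrank_ker rank_rT rankG.
Qed.

Lemma MDS_parity_neq0 (lam : 'cV[K]_m) :
  (forall x : 'rV_m, (x <= G)%MS <-> x *m lam = 0) -> MDS G ->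
  forall i, lam i 0 != 0.
Proof.
move=> lamP mdsG i; apply/negP => /eqP lam_i0.
have /lamP/mdsG : (delta_mx 0 i : 'rV_m) *m lam = 0.
  by apply/rowP => a; rewrite ord1 -rowE !mxE.
have -> : [set j | (delta_mx 0 i : 'rV[K]_m) 0 j != 0] = [set i].
  apply/setP => j; rewrite !inE mxE eqxx /= eq_sym.
  by case: (j == i); rewrite /= ?eqxx // eq_sym oner_eq0.
rewrite cards1 -mxrank_eq0 mxrank_delta => /(_ isT); lia.
Qed.

Lemma MDS_of_colsub_free :
  (forall i0, exists2 s : 'I_(m - 1) -> 'I_m,
     (forall r, s r != i0) & row_free (colsub s G)) ->
  MDS G.
Proof.
move=> colsub_free c /submxP[u ->{c}] /rV0Pn[i0 ui0_neq0].
have -> : (m - (m - 1) + 1 = 2)%N by lia.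
have [s s_neq_i0 freeGs] := colsub_free i0.
have : colsub s (u *m G) != 0.
  rewrite -mulmx_colsub mulmx_free_eq0 //; apply: contraNneq ui0_neq0 => ->.
  by rewrite mul0mx mxE.
case/rV0Pn => r; rewrite mxE => usr_neq0.
have : [set i0; s r] \subset [set j | (u *m G) 0 j != 0].
  by rewrite subUset !sub1set !inE ui0_neq0 usr_neq0.
by move/subset_leq_card; rewrite cards2 eq_sym (negPf (s_neq_i0 r)).
Qed.

End HyperplaneCode.

Section TensorCode.
Variables (K : fieldType) (k1 m k2 n : nat).
Variables (G1 : 'M[K]_(k1, m)) (G2 : 'M[K]_(k2, n)).

Lemma in_tensor0 : in_tensor G1 G2 0.
Proof.
split=> [j|i]; last by rewrite row0 sub0mx.
by rewrite (_ : (col j 0)^T = 0) ?sub0mx //; apply/matrixP => ? ?; rewrite !mxE.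
Qed.

Lemma in_tensorB X Y :
  in_tensor G1 G2 X -> in_tensor G1 G2 Y -> in_tensor G1 G2 (X - Y).
Proof.
move=> [cX rX] [cY rY]; split=> [j|i].
  by rewrite !linearB /= addmx_sub ?eqmx_opp.
by rewrite linearB /= addmx_sub ?eqmx_opp.
Qed.

Lemma correctableP E :
  correctable G1 G2 E <->
  (forall X, in_tensor G1 G2 X -> (forall i j, (i, j) \notin E -> X i j = 0) -> X = 0).
Proof.
split=> [corrE X tX X0 | corr0 X Y tX tY XY].
  by apply: corrE tX in_tensor0 _ => i j /X0 ->; rewrite mxE.
apply/eqP; rewrite -subr_eq0; apply/eqP/corr0; first exact: in_tensorB.
by move=> i j /XY; rewrite !mxE => ->; rewrite subrr.
Qed.

Lemma in_tensor_parityP (lam : 'cV[K]_m) X :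
  (forall x : 'rV_m, (x <= G1)%MS <-> x *m lam = 0) ->
  in_tensor G1 G2 X <-> (forall i, (row i X <= G2)%MS) /\ lam^T *m X = 0.
Proof.
move=> lamP; have lamX j : (lam^T *m X) 0 j = ((col j X)^T *m lam) 0 0.
  by rewrite !mxE; apply: eq_bigr => i _; rewrite !mxE mulrC.
split=> [[cX rX] | [rX lamX0]]; split=> //.
  by apply/rowP => j; rewrite lamX ((lamP _).1 (cX j)) !mxE.
by move=> j; apply/lamP/rowP => a; rewrite ord1 -lamX lamX0 !mxE.
Qed.

End TensorCode.

Definition erasure_pattern m n (A : 'I_m -> {set 'I_n}) : {set 'I_m * 'I_n} :=
  [set ij | ij.2 \notin A ij.1].

Definition unerased m n (E : {set 'I_m * 'I_n}) (i : 'I_m) : {set 'I_n} :=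
  [set j | (i, j) \notin E].

Lemma erasure_patternK m n (E : {set 'I_m * 'I_n}) :
  erasure_pattern (unerased E) = E.
Proof. by apply/setP => -[i j]; rewrite !inE negbK. Qed.

Section TensorWithParity.
Variables (K : fieldType) (k1 m k n : nat).
Variables (G1 : 'M[K]_(k1, m)) (G2 : 'M[K]_(k, n)) (lam : 'cV[K]_m).
Hypotheses (lam_neq0 : forall i, lam i 0 != 0)
  (lamP : forall x : 'rV_m, (x <= G1)%MS <-> x *m lam = 0)
  (G2_free : row_free G2).
Variable A : 'I_m -> {set 'I_n}.

Lemma correctable_of_saturated :
  saturated G2 A -> correctable G1 G2 (erasure_pattern A).
Proof.
move=> /saturatedP satA; apply/correctableP => X.
move=> /(in_tensor_parityP G2 X lamP)[rX lamX0] X0.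
pose w i := lam i 0 *: (row i X *m pinvmx G2).
have wG i : w i *m G2 = lam i 0 *: row i X by rewrite -scalemxAl mulmxKpV.
have w0 : forall i, w i = 0.
  apply: satA => [|i].
    apply: (row_free_inj G2_free); rewrite mul0mx mulmx_suml.
    apply: etrans lamX0; rewrite mulmx_sum_row.
    by apply: eq_bigr => i _; rewrite wG mxE.
  rewrite mulmx_colsub wG; apply/rowP => t; rewrite !mxE X0 ?mulr0 //.
  by rewrite inE /= negbK enum_valP.
apply/row_matrixP => i; have /eqP := w0 i.
rewrite -(mulmx_free_eq0 _ G2_free) wG scaler_eq0 (negPf (lam_neq0 i)) row0.
by move/eqP.
Qed.

Lemma saturated_of_correctable :
  correctable G1 G2 (erasure_pattern A) -> saturated G2 A.
Proof.
move=> /correctableP corrE; apply/saturatedP => w sum_w0 wA0.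
pose X := \matrix_i ((lam i 0)^-1 *: (w i *m G2)).
have lamX i : lam i 0 *: row i X = w i *m G2 by rewrite rowK scalerA divff ?scale1r.
have tX : in_tensor G1 G2 X.
  apply/(in_tensor_parityP G2 X lamP); split=> [i|].
    by rewrite rowK scalemx_sub ?submxMl.
  rewrite mulmx_sum_row -[RHS](mul0mx _ G2) -sum_w0 mulmx_suml.
  by apply: eq_bigr => i _; rewrite mxE lamX.
have X0 : X = 0.
  apply: corrE => // i j; rewrite inE /= negbK => j_in_A.
  have := congr1 (fun M : 'rV_#|A i| => M 0 (enum_rank_in j_in_A j)) (wA0 i).
  by rewrite mulmx_colsub !mxE enum_rankK_in // => ->; rewrite mulr0.
move=> i; apply: (row_free_inj G2_free).
by rewrite mul0mx -lamX X0 row0 scaler0.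
Qed.

Lemma correctable_saturatedP :
  correctable G1 G2 (erasure_pattern A) <-> saturated G2 A.
Proof. by split; [apply: saturated_of_correctable | apply: correctable_of_saturated]. Qed.

End TensorWithParity.

Lemma MDS_tensor_correctableP (K : fieldType) m n k
    (G1 : 'M[K]_(m - 1, m)) (G2 : 'M[K]_(k, n)) (A : 'I_m -> {set 'I_n}) :
  (0 < m)%N -> row_free G1 -> MDS G1 -> row_free G2 ->
  correctable G1 G2 (erasure_pattern A) <-> saturated G2 A.
Proof.
move=> m_gt0 G1_free G1_MDS G2_free.
have [lam lamP] := hyperplane_code_parity m_gt0 G1_free.
exact: (correctable_saturatedP (MDS_parity_neq0 m_gt0 lamP G1_MDS) lamP G2_free A).
Qed.

Lemma row_free_tofrac_of_map (R : idomainType) (L : fieldType)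
    (g : {rmorphism R -> L}) p q (M : 'M[R]_(p, q)) :
  row_free (map_mx g M) -> row_free (map_mx (@tofrac R) M).
Proof.
move=> /row_free_minorP[s]; rewrite -map_mxsub det_map_mx => gdet_neq0.
apply/row_free_minorP; exists s; rewrite -map_mxsub det_map_mx tofrac_eq0.
by apply: contra gdet_neq0 => /eqP->; rewrite rmorph0.
Qed.

Section Indeterminates.
Variables (F : fieldType) (N p n : nat) (sg : 'I_p -> 'I_n -> 'I_N).
Hypothesis sg_inj : forall i j i' j', sg i j = sg i' j' -> i = i' /\ j = j'.

Definition varmx : 'M[{mpoly F[N]}]_(p, n) := \matrix_(i, j) 'X_(sg i j).

Lemma varmx_specialize (L : comNzRingType) (phi : {rmorphism F -> L})
    (V : 'M[L]_(p, n)) :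
  exists g : {rmorphism {mpoly F[N]} -> L}, map_mx g varmx = V.
Proof.
pose h v := if [pick ij | sg ij.1 ij.2 == v] is Some ij then V ij.1 ij.2 else 0.
exists (mmap phi h); apply/matrixP => i j; rewrite !mxE.
apply: etrans (mmapX h phi U_(sg i j)) _; rewrite mmap1U /h.
case: pickP => [[i' j'] /= /eqP /sg_inj[-> ->] //|/(_ (i, j))].
by rewrite /= eqxx.
Qed.

Lemma saturated_varmx (L : fieldType) (phi : {rmorphism F -> L})
    (V : 'M[L]_(p, n)) l (A : 'I_l -> {set 'I_n}) :
  saturated V A -> saturated (map_mx (@tofrac _) varmx) A.
Proof.
have [g <-] := varmx_specialize phi V.
rewrite !saturated_row_free -!map_satmx; exact: row_free_tofrac_of_map.
Qed.

Lemma row_free_colsub_varmx (s : 'I_p -> 'I_n) :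
  injective s -> row_free (colsub s (map_mx (@tofrac _) varmx)).
Proof.
move=> s_inj; pose P : 'M[F]_(p, n) := \matrix_(i, j) (j == s i)%:R.
have [g gP] := varmx_specialize idfun P.
rewrite -map_mxsub; apply: (row_free_tofrac_of_map (g := g)).
rewrite map_mxsub gP (_ : colsub s P = 1%:M) ?row_free_unit ?unitmx1 //.
by apply/matrixP => i j; rewrite !mxE (inj_eq s_inj) eq_sym.
Qed.

End Indeterminates.

Lemma mxvec_index_inj p n (i : 'I_p) (j : 'I_n) i' j' :
  mxvec_index i j = mxvec_index i' j' -> i = i' /\ j = j'.
Proof. by move/cast_ord_inj/enum_rank_inj => [-> ->]. Qed.

Lemma widen_ord_inj p q (le_pq : (p <= q)%N) : injective (widen_ord le_pq).
Proof. by move=> i j [] /val_inj. Qed.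

Section GenericMatrices.
Variable F : fieldType.

Lemma genmxE k n :
  Defs.genmx F k n = map_mx (@tofrac _) (varmx F (@mxvec_index k n)).
Proof. by apply/matrixP => i j; rewrite !mxE. Qed.

Lemma genG1E m n a b :
  genG1 F m n a b =
  map_mx (@tofrac _) (varmx F (fun i j => lshift ((n - b) * n) (mxvec_index i j))).
Proof. by apply/matrixP => i j; rewrite !mxE. Qed.

Lemma genG2E m n a b :
  genG2 F m n a b =
  map_mx (@tofrac _) (varmx F (fun i j => rshift ((m - a) * m) (mxvec_index i j))).
Proof. by apply/matrixP => i j; rewrite !mxE. Qed.

Lemma genG1_colsub_free m n a b (s : 'I_(m - a) -> 'I_m) :
  injective s -> row_free (colsub s (genG1 F m n a b)).
Proof.
rewrite genG1E; apply: row_free_colsub_varmx.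
by move=> i j i' j' /lshift_inj/mxvec_index_inj.
Qed.

Lemma genG2_colsub_free m n a b (s : 'I_(n - b) -> 'I_n) :
  injective s -> row_free (colsub s (genG2 F m n a b)).
Proof.
rewrite genG2E; apply: row_free_colsub_varmx.
by move=> i j i' j' /rshift_inj/mxvec_index_inj.
Qed.

Lemma genG1_row_free m n a b : row_free (genG1 F m n a b).
Proof.
apply: (row_free_colsubW (s := widen_ord (leq_subr a m))).
exact/genG1_colsub_free/widen_ord_inj.
Qed.

Lemma genG2_row_free m n a b : row_free (genG2 F m n a b).
Proof.
apply: (row_free_colsubW (s := widen_ord (leq_subr b n))).
exact/genG2_colsub_free/widen_ord_inj.
Qed.

Lemma genG1_MDS m n b : (0 < m)%N -> MDS (genG1 F m n 1 b).
Proof.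
move=> m_gt0; apply: MDS_of_colsub_free => // i0.
exists (fun r => lift i0 (cast_ord (subn1 m) r)) => [r|].
  by rewrite eq_sym neq_lift.
by apply: genG1_colsub_free => r r' /lift_inj/cast_ord_inj.
Qed.

Lemma sat_property_genG2 m n a b k (A : 'I_m -> {set 'I_n}) :
  (n - b)%N = k -> sat_property F k A <-> saturated (genG2 F m n a b) A.
Proof.
move=> <-; rewrite /sat_property genmxE genG2E.
have genG2_inj : forall (i : 'I_(n - b)) (j : 'I_n) i' j',
    rshift ((m - a) * m) (mxvec_index i j) = rshift _ (mxvec_index i' j') ->
    i = i' /\ j = j'.
  by move=> i j i' j' /rshift_inj/mxvec_index_inj.
split=> satA.
  exact: (saturated_varmx genG2_inj (@tofrac _ \o @mpolyC _ F) satA).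
exact: (saturated_varmx (@mxvec_index_inj _ _) (@tofrac _ \o @mpolyC _ F) satA).
Qed.

End GenericMatrices.

Theorem theorem3p15 (F : fieldType) (m n b d : nat)
  (G : 'M[F]_(n - b, n)) (G' : 'M[F]_(m - 1, m)) :
  (b <= n)%N -> row_free G ->
  (d <= b)%N ->
  (0 < m)%N -> row_free G' -> @MDS F (m - 1) m G' ->
  @rMDS F (n - b) n d m G <-> @relaxed_MR F m n 1 b 1 (b - d) G' G.
Proof.
move=> le_bn G_free le_db m_gt0 G'_free G'_MDS.
have corr_G A := MDS_tensor_correctableP A m_gt0 G'_free G'_MDS G_free.
have corr_gen A : @MR_correctable F m n 1 (b - d) (erasure_pattern A) <->
                  saturated (genG2 F m n 1 (b - d)) A.
  exact: (MDS_tensor_correctableP A m_gt0 (genG1_row_free _ _ _ _ _)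
            (@genG1_MDS F m n (b - d) m_gt0) (genG2_row_free _ _ _ _ _)).
have nbd : (n - (b - d) = n - b + d)%N by lia.
have sat_gen (A : 'I_m -> {set 'I_n}) := sat_property_genG2 F 1 A nbd.
split=> [rMDS_G | [_ [_ MR_G]] A /sat_gen/corr_gen/MR_G/corr_G //].
split=> //; split=> [|E]; first exact: leq_subr.
by rewrite -(erasure_patternK E) => /corr_gen/sat_gen/rMDS_G/corr_G.
Qed.
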